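(* In the setting where $\alpha\in(0,1)$ and $\lambda_1,\dots,\lambda_r\in\mathbb{C}$ are distinct with multiplicities $n_1,\dots,n_r\ge1$, consider $$({}^LD^\alpha-\lambda_1)^{n_1}\circ\cdots\circ({}^LD^\alpha-\lambda_r)^{n_r}x(t)=\sum_{j=0}^J\beta_jt^j\mathcal{E}_\alpha^{(j)}(\mu t),$$ with $\beta_j,\mu\in\mathbb{C}$, $J\ge0$, and any initial values $x(0),{}^LD^\alpha x(0),\dots,{}^LD^{(m-1)\circ\alpha}x(0)$, $m=n_1+\dots+n_r$. If $\mu\neq\lambda_l$ for all $l$, the solution $x$ lies in the span of $\mathcal{B}\cup\{t^j\mathcal{E}_\alpha^{(j)}(\mu t):j=0,\dots,J\}$. If $\mu=\lambda_{l_0}$ for some $l_0$, then $x$ lies in the span of $\big(\bigcup_{l\neq l_0}\mathcal{B}_{\lambda_l,n_l}\big)\cup\{t^k\mathcal{E}_\alpha^{(k)}(\lambda_{l_0}t):k=0,\dots,J+n_{l_0}\}$.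
   Context: $\mathcal{E}_\alpha(s)=\sum_{n=0}^\infty\frac{s^n}{\Gamma(2-\alpha)^n\prod_{j=1}^n\frac{\Gamma(j+1)}{\Gamma(j+1-\alpha)}}$ (entire), $\mathcal{E}_\alpha^{(k)}$ its $k$-th ordinary derivative. $\mathcal{B}_{\lambda_l,n_l}=\{t^k\mathcal{E}_\alpha^{(k)}(\lambda_lt):k=0,\dots,n_l-1\}$ and $\mathcal{B}=\bigcup_l\mathcal{B}_{\lambda_l,n_l}$. Solutions are taken among functions on $[0,\infty)$ given by everywhere convergent power series, with the equation holding for all $t\ge0$. ${}^LD^\alpha x(t)=\frac{\Gamma(2-\alpha)}{t^{1-\alpha}}\cdot\frac{1}{\Gamma(1-\alpha)}\int_0^t (t-\tau)^{-\alpha}x'(\tau)d\tau$ for $t>0$, acting termwise on power series: ${}^LD^\alpha\sum_nx_nt^n=\sum_nx_{n+1}\frac{\Gamma(n+2)\Gamma(2-\alpha)}{\Gamma(n+2-\alpha)}t^n$ (also defining the value at $t=0$). ${}^LD^{k\circ\alpha}$ and $({}^LD^\alpha-\lambda)^k$ denote $k$-fold compositions. *)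

From Stdlib Require Import Reals List Factorial.
From Coquelicot Require Import Coquelicot.
Import ListNotations.
Open Scope R_scope.

Notation CC := Complex.C.

Definition Gamma (x : R) : R :=
  RInt_gen (fun t => Rpower t (x - 1) * exp (- t)) (at_right 0) (Rbar_locally p_infty).

(* Sum of a complex series (real and imaginary parts summed separately;
   this is the complex sum whenever the series converges). *)
Definition csum (a : nat -> CC) : CC :=
  (Series (fun n => Re (a n)), Series (fun n => Im (a n))).

Definition fsum (n : nat) (f : nat -> CC) : CC :=
  fold_right Cplus (RtoC 0) (map f (seq 0 n)).

Definition pseries_eval (a : nat -> CC) (t : R) : CC :=
  csum (fun n => (a n * (RtoC t) ^ n)%C).

Definition entire_coeffs (a : nat -> CC) : Prop :=
  forall z : CC, ex_series (fun n => (a n * z ^ n)%C).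

(* Coefficient of s^n in E_alpha:
   1 / (Gamma(2-alpha)^n * prod_{j=1}^n Gamma(j+1)/Gamma(j+1-alpha)) *)
Fixpoint Ecoef (alpha : R) (n : nat) : R :=
  match n with
  | O => 1
  | S m => Ecoef alpha m /
           (Gamma (2 - alpha) * (Gamma (INR (S m) + 1) / Gamma (INR (S m) + 1 - alpha)))
  end.

(* k-th derivative of the entire function E_alpha, as the k-times
   termwise differentiated power series:
   E^(k)(s) = sum_n Ecoef(n+k) * (n+k)!/n! * s^n *)
Definition Eder (alpha : R) (k : nat) (s : CC) : CC :=
  csum (fun n => (RtoC (Ecoef alpha (n + k) * INR (fact (n + k)) / INR (fact n)) * s ^ n)%C).

Definition Ebasis (alpha : R) (k : nat) (lam : CC) (t : R) : CC :=
  ((RtoC t) ^ k * Eder alpha k (lam * RtoC t))%C.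

(* ^L D^alpha acting termwise on power series coefficients:
   (D x)_n = x_{n+1} Gamma(n+2) Gamma(2-alpha) / Gamma(n+2-alpha) *)
Definition LD (alpha : R) (a : nat -> CC) : nat -> CC :=
  fun n => (a (S n) * RtoC (Gamma (INR n + 2) * Gamma (2 - alpha) / Gamma (INR n + 2 - alpha)))%C.

Definition LDsub (alpha : R) (lam : CC) (a : nat -> CC) : nat -> CC :=
  fun n => (LD alpha a n - lam * a n)%C.

Definition LDpoly (alpha : R) (r : nat) (lam : nat -> CC) (mult : nat -> nat)
  (a : nat -> CC) : nat -> CC :=
  fold_right (fun l acc => Nat.iter (mult l) (LDsub alpha (lam l)) acc) a (seq 0 r).

From Stdlib Require Import Reals Lra Lia List Factorial FunctionalExtensionality Classical.
From Coquelicot Require Import Coquelicot.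
Open Scope R_scope.

(* Everything happens on power-series coefficients.  LD alpha acts as the weighted shift
   a_n |-> gamma_n a_(n+1), gamma_n = Gamma(n+2) Gamma(2-alpha) / Gamma(n+2-alpha), and the
   coefficients B_(k,lam) of t^k E^(k)(lam t) satisfy
     (LD alpha - lam0) B_(k,lam) = (lam - lam0) B_(k,lam) + k B_(k-1,lam).
   Hence LD alpha - lam0 maps the span of the B_(k,lam), k < N lam, onto itself after raising
   N lam0 by one, and its kernel is spanned by B_(0,lam0); peeling off the factors of the
   operator one by one puts x in the span with multiplicity J+1 at mu and n_l at lam_l.
   The analytic input is that all these sequences are entire (gamma_n grows at most
   geometrically and 1/gamma_n -> 0, by crude estimates of Gamma), so that power series
   may be evaluated termwise and the identity theorem turns the equation, which holds
   for t >= 0 only, into an equality of coefficient sequences. *)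

Lemma exp_le_exp x y : x <= y -> exp x <= exp y.
Proof. intros [Hlt|Heq]; [left; apply exp_increasing, Hlt | right; rewrite Heq; reflexivity]. Qed.

Lemma exp_opp_le_1 t : 0 <= t -> exp (- t) <= 1.
Proof. intros Ht. rewrite <- exp_0. apply exp_le_exp. lra. Qed.

Lemma exp_INR n : exp (INR n) = exp 1 ^ n.
Proof. induction n as [|n IHn]; [apply exp_0|]. rewrite S_INR, exp_plus, IHn. simpl. ring. Qed.

Lemma Rpower_1_l s : Rpower 1 s = 1.
Proof. unfold Rpower. rewrite ln_1, Rmult_0_r. apply exp_0. Qed.

Lemma pow_le_fact_exp y m : 0 <= y -> y ^ m <= INR (fact m) * exp y.
Proof.
  intros Hy. pose proof (exp_ge_taylor y m Hy) as Htaylor.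
  assert (Hfact : 0 < INR (fact m)) by apply lt_0_INR, lt_O_fact.
  assert (Hterm : y ^ m / INR (fact m) <= exp y).
  { destruct m as [|m]; [simpl in *; lra|]. rewrite tech5 in Htaylor.
    enough (0 <= sum_f_R0 (fun k => y ^ k / INR (fact k)) m) by lra.
    apply cond_pos_sum. intros n. apply Rdiv_le_0_compat; [apply pow_le; auto|].
    apply lt_0_INR, lt_O_fact. }
  replace (y ^ m) with (INR (fact m) * (y ^ m / INR (fact m))) by (field; lra).
  apply Rmult_le_compat_l; lra.
Qed.

Lemma fact_le_pow m : INR (fact m) <= INR m ^ m.
Proof.
  induction m as [|m IHm]; [simpl; lra|].
  change (fact (S m)) with (S m * fact m)%nat. rewrite mult_INR.
  change (INR (S m) ^ S m) with (INR (S m) * INR (S m) ^ m).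
  pose proof (pos_INR m). pose proof (lt_0_INR (S m) (Nat.lt_0_succ m)).
  assert (INR m ^ m <= INR (S m) ^ m) by (apply pow_incr; rewrite S_INR; lra).
  apply Rmult_le_compat_l; lra.
Qed.

Lemma INR_S_le_pow2 n : INR (S n) <= 2 ^ n.
Proof.
  induction n as [|n IHn]; [simpl; lra|].
  rewrite S_INR. simpl (2 ^ S n). pose proof (pow_R1_Rle 2 n ltac:(lra)). lra.
Qed.

Lemma bounded_sup (P : R -> Prop) (g : R -> R) (M : R) :
  (exists a, P a) -> (forall a, P a -> g a <= M) ->
  exists s, s <= M /\ (forall a, P a -> g a <= s) /\
    forall eps, 0 < eps -> exists a, P a /\ s - eps < g a.
Proof.
  intros [a0 Ha0] HM.
  destruct (completeness (fun y => exists a, P a /\ y = g a)) as [s [Hub Hlub]].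
  - exists M. intros y [a [Ha ->]]. auto.
  - exists (g a0), a0. auto.
  - exists s. split; [apply Hlub; intros y [a [Ha ->]]; auto|]. split.
    + intros a Ha. apply Hub. exists a. auto.
    + intros eps Heps. apply NNPP. intros Hno.
      assert (s <= s - eps); [|lra].
      apply Hlub. intros y [a [Ha ->]].
      apply Rnot_lt_le. intros Hlt. apply Hno. exists a. auto.
Qed.

Lemma RInt_le_const (f : R -> R) (a b M : R) : a <= b -> ex_RInt f a b ->
  (forall t, a < t < b -> f t <= M) -> RInt f a b <= (b - a) * M.
Proof.
  intros Hab Hf HM.
  replace ((b - a) * M) with (RInt (fun _ => M) a b) by (rewrite RInt_const; reflexivity).
  apply RInt_le; auto. apply ex_RInt_const.
Qed.

Lemma RInt_ge_const (f : R -> R) (a b M : R) : a <= b -> ex_RInt f a b ->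
  (forall t, a < t < b -> M <= f t) -> (b - a) * M <= RInt f a b.
Proof.
  intros Hab Hf HM.
  replace ((b - a) * M) with (RInt (fun _ => M) a b) by (rewrite RInt_const; reflexivity).
  apply RInt_le; auto. apply ex_RInt_const.
Qed.

(** * Improper integrals of positive functions *)

Section PositiveIntegral.
Variable f : R -> R.
Hypothesis f_cont : forall t, 0 < t -> continuous f t.
Hypothesis f_ge0 : forall t, 0 < t -> 0 <= f t.

Lemma ex_RInt_pos a b : 0 < a -> 0 < b -> ex_RInt f a b.
Proof.
  intros Ha Hb. apply (ex_RInt_continuous (V:=R_CompleteNormedModule)).
  intros z [Hz _]. apply f_cont.
  eapply Rlt_le_trans; [|exact Hz]. unfold Rmin; destruct (Rle_dec a b); lra.
Qed.

Lemma RInt_pos_Chasles a b c : 0 < a -> 0 < b -> 0 < c ->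
  RInt f a b + RInt f b c = RInt f a c.
Proof.
  intros Ha Hb Hc. exact (RInt_Chasles f a b c (ex_RInt_pos a b Ha Hb) (ex_RInt_pos b c Hb Hc)).
Qed.

Lemma RInt_pos_ge0 a b : 0 < a <= b -> 0 <= RInt f a b.
Proof.
  intros Hab. apply RInt_ge_0; [lra | apply ex_RInt_pos; lra |].
  intros t Ht. apply f_ge0. lra.
Qed.

Lemma RInt_pos_mono a b a' b' : 0 < a' <= a -> a <= b <= b' -> RInt f a b <= RInt f a' b'.
Proof.
  intros Ha Hb.
  rewrite <- (RInt_pos_Chasles a' a b'), <- (RInt_pos_Chasles a b b') by lra.
  pose proof (RInt_pos_ge0 a' a). pose proof (RInt_pos_ge0 b b'). lra.
Qed.

Lemma is_RInt_gen_pos_sup (c Lo U : R) : 0 < c ->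
  (forall a, 0 < a < c -> RInt f a c <= Lo) ->
  (forall eps, 0 < eps -> exists a, 0 < a < c /\ Lo - eps < RInt f a c) ->
  (forall b, c < b -> RInt f c b <= U) ->
  (forall eps, 0 < eps -> exists b, c < b /\ U - eps < RInt f c b) ->
  is_RInt_gen f (at_right 0) (Rbar_locally p_infty) (Lo + U).
Proof.
  intros Hc Hlo Hlo' Hu Hu' P [eps HP].
  destruct (Hlo' (eps / 2)) as [a0 [Ha0 Ha0']]; [apply is_pos_div_2|].
  destruct (Hu' (eps / 2)) as [b0 [Hb0 Hb0']]; [apply is_pos_div_2|].
  apply (Filter_prod _ _ _ (fun a => 0 < a < a0) (fun b => b0 < b)).
  - exists (mkposreal a0 (proj1 Ha0)). intros y Hy Hy0. split; [exact Hy0|].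
    apply Rabs_lt_between in Hy. unfold minus, plus, opp in Hy; simpl in Hy. lra.
  - exists b0. auto.
  - intros a b Ha Hb. simpl. exists (RInt f a b). split.
    + apply (RInt_correct (V:=R_CompleteNormedModule)), ex_RInt_pos; lra.
    + apply HP. apply Rabs_lt_between. unfold minus, plus, opp; simpl.
      rewrite <- (RInt_pos_Chasles a c b) by lra.
      pose proof (RInt_pos_mono a0 c a c ltac:(lra) ltac:(lra)).
      pose proof (RInt_pos_mono c b0 c b ltac:(lra) ltac:(lra)).
      pose proof (Hlo a ltac:(lra)). pose proof (Hu b ltac:(lra)). lra.
Qed.

Lemma RInt_gen_pos_bounds (c A B : R) : 0 < c ->
  (forall a, 0 < a < c -> RInt f a c <= A) ->
  (forall b, c < b -> RInt f c b <= B) ->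
  (forall a b, 0 < a <= b -> RInt f a b <= RInt_gen f (at_right 0) (Rbar_locally p_infty)) /\
  RInt_gen f (at_right 0) (Rbar_locally p_infty) <= A + B.
Proof.
  intros Hc HA HB.
  destruct (bounded_sup (fun a => 0 < a < c) (fun a => RInt f a c) A) as [Lo [HLoA [Hlo Hlo']]];
    [exists (c / 2); lra | exact HA |].
  destruct (bounded_sup (fun b => c < b) (RInt f c) B) as [U [HUB [Hu Hu']]];
    [exists (c + 1); lra | exact HB |].
  rewrite (is_RInt_gen_unique _ _ (is_RInt_gen_pos_sup c Lo U Hc Hlo Hlo' Hu Hu')).
  split; [|lra].
  intros a b Hab.
  set (a' := Rmin a (c / 2)). set (b' := Rmax b (c + 1)).
  assert (Ha' : 0 < a' <= a /\ a' < c).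
  { pose proof (Rmin_l a (c / 2)). pose proof (Rmin_r a (c / 2)).
    assert (0 < a') by (apply Rmin_glb_lt; lra). unfold a' in *. lra. }
  assert (Hb' : b <= b' /\ c < b').
  { pose proof (Rmax_l b (c + 1)). pose proof (Rmax_r b (c + 1)). unfold b'. lra. }
  pose proof (RInt_pos_mono a b a' b' ltac:(lra) ltac:(lra)) as Hmono.
  rewrite <- (RInt_pos_Chasles a' c b') in Hmono by lra.
  pose proof (Hlo a' ltac:(lra)). pose proof (Hu b' ltac:(lra)). lra.
Qed.

End PositiveIntegral.

(** * Estimates for the Gamma function *)

Definition gamma_integrand (x t : R) : R := Rpower t (x - 1) * exp (- t).

Lemma gamma_integrand_pos x t : 0 < t -> 0 < gamma_integrand x t.
Proof. intros. unfold gamma_integrand, Rpower. apply Rmult_lt_0_compat; apply exp_pos. Qed.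

Lemma gamma_integrand_continuous x t : 0 < t -> continuous (gamma_integrand x) t.
Proof.
  intros Ht. apply continuity_pt_filterlim, continuity_pt_mult.
  - apply derivable_continuous_pt. exists ((x - 1) * Rpower t (x - 1 - 1)).
    apply derivable_pt_lim_power; auto.
  - apply (continuity_pt_comp (fun t => - t) exp).
    + apply continuity_pt_opp, continuity_pt_id.
    + apply derivable_continuous_pt, derivable_pt_exp.
Qed.

Lemma Gamma_bounds x c A B : 0 < c ->
  (forall a, 0 < a < c -> RInt (gamma_integrand x) a c <= A) ->
  (forall b, c < b -> RInt (gamma_integrand x) c b <= B) ->
  (forall a b, 0 < a <= b -> RInt (gamma_integrand x) a b <= Gamma x) /\ Gamma x <= A + B.
Proof.
  apply RInt_gen_pos_bounds.
  - apply gamma_integrand_continuous.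
  - intros t Ht. left. apply gamma_integrand_pos, Ht.
Qed.

Lemma ex_RInt_gamma_integrand x a b : 0 < a -> 0 < b -> ex_RInt (gamma_integrand x) a b.
Proof. apply ex_RInt_pos, gamma_integrand_continuous. Qed.

Lemma continuous_exp_half t : continuity_pt (fun t => exp (- t / 2)) t.
Proof.
  apply (continuity_pt_comp (fun t => - t / 2) exp).
  - apply continuity_pt_mult; [apply continuity_pt_opp, continuity_pt_id | apply continuity_pt_const].
    intros u v; reflexivity.
  - apply derivable_continuous_pt, derivable_pt_exp.
Qed.

Lemma RInt_exp_half_le b : 1 <= b -> RInt (fun t => exp (- t / 2)) 1 b <= 2.
Proof.
  intros Hb.
  assert (H : is_RInt (fun t => exp (- t / 2)) 1 b (-2 * exp (- b / 2) - -2 * exp (- (1) / 2))).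
  { apply (is_RInt_derive (V:=R_CompleteNormedModule) (fun t => -2 * exp (- t / 2))).
    - intros t _. auto_derive; auto. lra.
    - intros t _. apply continuity_pt_filterlim, continuous_exp_half. }
  rewrite (is_RInt_unique _ _ _ _ H).
  pose proof (exp_pos (- b / 2)).
  assert (exp (- (1) / 2) < exp 0) by (apply exp_increasing; lra).
  rewrite exp_0 in *. lra.
Qed.

Lemma gamma_integrand_le_1 x t : 1 <= x -> 0 < t <= 1 -> gamma_integrand x t <= 1.
Proof.
  intros Hx Ht. unfold gamma_integrand.
  assert (Rpower t (x - 1) <= 1) by (rewrite <- (Rpower_1_l (x - 1)) at 2; apply Rle_Rpower_l; lra).
  pose proof (exp_opp_le_1 t). pose proof (exp_pos (- t)). nra.
Qed.

Lemma gamma_integrand_tail x m t : x - 1 <= INR m -> 1 <= t ->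
  gamma_integrand x t <= INR (fact m) * 2 ^ m * exp (- t / 2).
Proof.
  intros Hm Ht. unfold gamma_integrand.
  assert (Hpow : Rpower t (x - 1) <= t ^ m) by (rewrite <- Rpower_pow by lra; apply Rle_Rpower; lra).
  assert (Hexp : t ^ m <= INR (fact m) * 2 ^ m * exp (t / 2)).
  { replace (t ^ m) with (2 ^ m * (t / 2) ^ m) by (rewrite <- Rpow_mult_distr; f_equal; field).
    pose proof (pow_le_fact_exp (t / 2) m ltac:(lra)). pose proof (pow_lt 2 m ltac:(lra)). nra. }
  replace (exp (- t / 2)) with (exp (t / 2) * exp (- t)) by (rewrite <- exp_plus; f_equal; field).
  pose proof (exp_pos (- t)). nra.
Qed.

Lemma RInt_gamma_integrand_head x a : 1 <= x -> 0 < a < 1 -> RInt (gamma_integrand x) a 1 <= 1.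
Proof.
  intros Hx Ha. eapply Rle_trans.
  - apply RInt_le_const; [lra | apply ex_RInt_gamma_integrand; lra |].
    intros t Ht. apply gamma_integrand_le_1; lra.
  - lra.
Qed.

Lemma RInt_gamma_integrand_tail x m b : x - 1 <= INR m -> 1 < b ->
  RInt (gamma_integrand x) 1 b <= INR (fact m) * 2 ^ S m.
Proof.
  intros Hm Hb.
  assert (Hexp : ex_RInt (fun t => exp (- t / 2)) 1 b).
  { apply (ex_RInt_continuous (V:=R_CompleteNormedModule)). intros t _.
    apply continuity_pt_filterlim, continuous_exp_half. }
  apply Rle_trans with (RInt (fun t => scal (INR (fact m) * 2 ^ m) (exp (- t / 2))) 1 b).
  - apply RInt_le; [lra | apply ex_RInt_gamma_integrand; lra |
      apply (ex_RInt_scal (V:=R_CompleteNormedModule)), Hexp |].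
    intros t Ht. apply gamma_integrand_tail; lra.
  - rewrite (RInt_scal (V:=R_CompleteNormedModule)) by exact Hexp.
    pose proof (RInt_exp_half_le b ltac:(lra)).
    assert (0 < INR (fact m) * 2 ^ m)
      by (apply Rmult_lt_0_compat; [apply lt_0_INR, lt_O_fact | apply pow_lt; lra]).
    change (scal ?k ?y) with (k * y).
    apply Rle_trans with (INR (fact m) * 2 ^ m * 2); [apply Rmult_le_compat_l; lra|].
    right. rewrite <- tech_pow_Rmult. ring.
Qed.

Lemma Gamma_ge_RInt x a b : 1 <= x -> 0 < a <= b -> RInt (gamma_integrand x) a b <= Gamma x.
Proof.
  intros Hx. destruct (INR_unbounded (x - 1)) as [m Hm].
  refine (proj1 (Gamma_bounds x 1 1 (INR (fact m) * 2 ^ S m) Rlt_0_1 _ _) a b).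
  - intros a' Ha'. apply RInt_gamma_integrand_head; lra.
  - intros b' Hb'. apply RInt_gamma_integrand_tail; lra.
Qed.

Lemma Gamma_upper x m : 1 <= x -> x - 1 <= INR m -> Gamma x <= 1 + INR (fact m) * 2 ^ S m.
Proof.
  intros Hx Hm. apply (Gamma_bounds x 1); [lra | |].
  - intros a Ha. apply RInt_gamma_integrand_head; lra.
  - intros b Hb. apply RInt_gamma_integrand_tail; lra.
Qed.

Lemma Gamma_ge_interval x T : 1 <= x -> 0 < T ->
  Rpower T (x - 1) * exp (- (T + 1)) <= Gamma x.
Proof.
  intros Hx HT. eapply Rle_trans; [|apply (Gamma_ge_RInt x T (T + 1)); lra].
  rewrite <- (Rmult_1_l (_ * _)). replace 1 with (T + 1 - T) at 1 by ring.
  apply RInt_ge_const; [lra | apply ex_RInt_gamma_integrand; lra |].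
  intros t Ht. unfold gamma_integrand.
  assert (Rpower T (x - 1) <= Rpower t (x - 1)) by (apply Rle_Rpower_l; lra).
  assert (exp (- (T + 1)) <= exp (- t)) by (apply exp_le_exp; lra).
  assert (0 < Rpower T (x - 1)) by (unfold Rpower; apply exp_pos).
  pose proof (exp_pos (- (T + 1))). nra.
Qed.

Lemma Gamma_pos x : 1 <= x -> 0 < Gamma x.
Proof.
  intros Hx. eapply Rlt_le_trans; [|apply (Gamma_ge_interval x 1); lra].
  rewrite Rpower_1_l, Rmult_1_l. apply exp_pos.
Qed.

(* Split at [c]: below [c] the integrand is at most [c^(x-1)], above [c] the extra factor
   [t^(-al)] is at most [c^(-al)]. *)
Lemma Gamma_sub_le x al c : 0 <= al -> 1 + al <= x -> 1 <= c ->
  Gamma (x - al) <= Rpower c x + Rpower c (- al) * Gamma x.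
Proof.
  intros Hal Hx Hc. apply (Gamma_bounds (x - al) c); [lra | |].
  - intros a Ha. apply Rle_trans with ((c - a) * Rpower c (x - 1)).
    + apply RInt_le_const; [lra | apply ex_RInt_gamma_integrand; lra |].
      intros t Ht. unfold gamma_integrand.
      assert (Rpower t (x - al - 1) <= Rpower c (x - al - 1)) by (apply Rle_Rpower_l; lra).
      assert (Rpower c (x - al - 1) <= Rpower c (x - 1)) by (apply Rle_Rpower; lra).
      assert (0 < Rpower t (x - al - 1)) by (unfold Rpower; apply exp_pos).
      pose proof (exp_opp_le_1 t ltac:(lra)).
      apply Rle_trans with (Rpower t (x - al - 1)); [|lra].
      rewrite <- (Rmult_1_r (Rpower t (x - al - 1))) at 2. apply Rmult_le_compat_l; lra.
    + replace (Rpower c x) with (c * Rpower c (x - 1))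
        by (rewrite <- (Rpower_1 c) at 1 by lra; rewrite <- Rpower_plus; f_equal; ring).
      apply Rmult_le_compat_r; [unfold Rpower; left; apply exp_pos | lra].
  - intros b Hb.
    apply Rle_trans with (RInt (fun t => scal (Rpower c (- al)) (gamma_integrand x t)) c b).
    + apply RInt_le; [lra | apply ex_RInt_gamma_integrand; lra |
        apply (ex_RInt_scal (V:=R_CompleteNormedModule)), ex_RInt_gamma_integrand; lra |].
      intros t Ht. change (scal ?k ?y) with (k * y).
      pose proof (gamma_integrand_pos x t ltac:(lra)). unfold gamma_integrand in *.
      replace (x - al - 1) with (x - 1 + - al) by ring. rewrite Rpower_plus.
      assert (Rpower t (- al) <= Rpower c (- al)).
      { rewrite !Rpower_Ropp. apply Rinv_le_contravar; [unfold Rpower; apply exp_pos|].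
        apply Rle_Rpower_l; lra. }
      replace (Rpower t (x - 1) * Rpower t (- al) * exp (- t))
        with (Rpower t (- al) * (Rpower t (x - 1) * exp (- t))) by ring.
      apply Rmult_le_compat_r; lra.
    + rewrite (RInt_scal (V:=R_CompleteNormedModule)) by (apply ex_RInt_gamma_integrand; lra).
      apply Rmult_le_compat_l; [unfold Rpower; left; apply exp_pos|].
      apply Gamma_ge_RInt; lra.
Qed.

(* With [Gamma (n+2) >= (2c)^(n+1) e^(-(2c+1))] the first term of [Gamma_sub_le] becomes
   geometrically small. *)
Lemma Gamma_ratio_le al c n : 0 < al < 1 -> 1 <= c ->
  Gamma (INR n + 2 - al) / Gamma (INR n + 2) <= c * exp (2 * c + 1) * (/ 2) ^ S n + Rpower c (- al).
Proof.
  intros Hal Hc. pose proof (pos_INR n) as Hn.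
  assert (HG : 0 < Gamma (INR n + 2)) by (apply Gamma_pos; lra).
  pose proof (Gamma_sub_le (INR n + 2) al c ltac:(lra) ltac:(lra) Hc) as Hsub.
  pose proof (Gamma_ge_interval (INR n + 2) (2 * c) ltac:(lra) ltac:(lra)) as Hlow.
  set (K := c * exp (2 * c + 1) * (/ 2) ^ S n) in *.
  assert (HK : 0 <= K).
  { unfold K. pose proof (exp_pos (2 * c + 1)). pose proof (pow_le (/ 2) (S n) ltac:(lra)).
    apply Rmult_le_pos; [apply Rmult_le_pos|]; lra. }
  assert (Hpow : Rpower c (INR n + 2) = K * (Rpower (2 * c) (INR n + 2 - 1) * exp (- (2 * c + 1)))).
  { unfold K. replace (INR n + 2 - 1) with (INR (S n)) by (rewrite S_INR; ring).
    replace (INR n + 2) with (INR (S (S n))) by (rewrite !S_INR; ring).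
    rewrite !Rpower_pow, Rpow_mult_distr, pow_inv, exp_Ropp by lra.
    change (c ^ S (S n)) with (c * c ^ S n).
    pose proof (exp_pos (2 * c + 1)). pose proof (pow_lt 2 (S n) ltac:(lra)).
    field. lra. }
  rewrite Hpow in Hsub.
  assert (K * (Rpower (2 * c) (INR n + 2 - 1) * exp (- (2 * c + 1))) <= K * Gamma (INR n + 2))
    by (apply Rmult_le_compat_l; lra).
  apply Rle_div_l; lra.
Qed.

Lemma Gamma_ratio_lim al : 0 < al < 1 ->
  is_lim_seq (fun n => Gamma (INR n + 2 - al) / Gamma (INR n + 2)) 0.
Proof.
  intros Hal. apply is_lim_seq_Reals. intros eps Heps.
  set (c := Rmax 1 (Rpower (2 / eps) (/ al))).
  assert (Hc : 1 <= c) by apply Rmax_l.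
  assert (Hcal : Rpower c (- al) <= eps / 2).
  { assert (H2eps : 0 < 2 / eps) by (apply Rdiv_lt_0_compat; lra).
    assert (2 / eps <= Rpower c al).
    { replace (2 / eps) with (Rpower (Rpower (2 / eps) (/ al)) al)
        by (rewrite Rpower_mult, Rinv_l, Rpower_1 by lra; reflexivity).
      apply Rle_Rpower_l; [lra|]. split; [unfold Rpower; apply exp_pos | apply Rmax_r]. }
    rewrite Rpower_Ropp. replace (eps / 2) with (/ (2 / eps)) by (field; lra).
    apply Rinv_le_contravar; lra. }
  set (K := c * exp (2 * c + 1)).
  assert (HK : 0 < K) by (unfold K; pose proof (exp_pos (2 * c + 1)); nra).
  destruct (pow_lt_1_zero (/ 2) ltac:(rewrite Rabs_pos_eq; lra) (eps / (2 * K)))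
    as [N HN]; [apply Rdiv_lt_0_compat; lra|].
  exists N. intros n Hn. unfold R_dist. rewrite Rminus_0_r.
  pose proof (pos_INR n).
  pose proof (Gamma_pos (INR n + 2 - al) ltac:(lra)). pose proof (Gamma_pos (INR n + 2) ltac:(lra)).
  rewrite Rabs_pos_eq by (apply Rlt_le, Rdiv_lt_0_compat; lra).
  pose proof (Gamma_ratio_le al c n Hal Hc) as Hratio.
  specialize (HN (S n) ltac:(lia)). rewrite Rabs_pos_eq in HN by (apply pow_le; lra).
  assert (K * (/ 2) ^ S n < eps / 2).
  { replace (eps / 2) with (K * (eps / (2 * K))) by (field; lra).
    apply Rmult_lt_compat_l; lra. }
  fold K in Hratio. lra.
Qed.

Lemma Gamma_nat_upper n : Gamma (INR n + 2) <= 8 * (4 * INR (S n)) ^ n.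
Proof.
  pose proof (pos_INR n).
  eapply Rle_trans; [apply (Gamma_upper _ (S n)); rewrite ?S_INR; lra|].
  pose proof (fact_le_pow (S n)) as Hfact. pose proof (INR_S_le_pow2 n) as H2.
  assert (HSn : 1 <= INR (S n)) by (rewrite S_INR; lra).
  assert (HSn' : 1 <= INR (S n) ^ n) by (apply pow_R1_Rle; lra).
  assert (H2n : 1 <= 2 ^ n) by (apply pow_R1_Rle; lra).
  rewrite Rpow_mult_distr.
  replace (4 ^ n) with (2 ^ n * 2 ^ n) by (rewrite <- Rpow_mult_distr; f_equal; ring).
  change (INR (S n) ^ S n) with (INR (S n) * INR (S n) ^ n) in Hfact.
  replace (2 ^ S (S n)) with (4 * 2 ^ n) by (simpl; ring).
  assert (INR (fact (S n)) * (4 * 2 ^ n) <= 4 * (2 ^ n * 2 ^ n * INR (S n) ^ n)).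
  { apply Rle_trans with (INR (S n) * INR (S n) ^ n * (4 * 2 ^ n));
      [apply Rmult_le_compat_r; lra|].
    replace (4 * (2 ^ n * 2 ^ n * INR (S n) ^ n)) with (2 ^ n * INR (S n) ^ n * (4 * 2 ^ n)) by ring.
    apply Rmult_le_compat_r; [lra|]. apply Rmult_le_compat_r; lra. }
  assert (1 <= 2 ^ n * 2 ^ n) by (rewrite <- (Rmult_1_r 1) at 1; apply Rmult_le_compat; lra).
  assert (1 <= 2 ^ n * 2 ^ n * INR (S n) ^ n)
    by (rewrite <- (Rmult_1_r 1) at 1; apply Rmult_le_compat; lra).
  lra.
Qed.

Lemma Gamma_nat_sub_lower al n : 0 <= al < 1 ->
  INR (S n) ^ n * exp (- (INR n + 2)) <= Gamma (INR n + 2 - al).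
Proof.
  intros Hal. pose proof (pos_INR n).
  eapply Rle_trans; [|apply (Gamma_ge_interval _ (INR n + 1)); lra].
  replace (INR n + 1 + 1) with (INR n + 2) by ring.
  apply Rmult_le_compat_r; [left; apply exp_pos|].
  rewrite S_INR, <- Rpower_pow by lra. apply Rle_Rpower; lra.
Qed.

(** * The weights of LD and the coefficients of E_alpha *)

Section LDfactor.
Variable alpha : R.
Hypothesis alpha_range : 0 < alpha < 1.

Definition LDfactor (n : nat) : R :=
  Gamma (INR n + 2) * Gamma (2 - alpha) / Gamma (INR n + 2 - alpha).

Lemma LDsub_eq lam u n : LDsub alpha lam u n = (u (S n) * RtoC (LDfactor n) - lam * u n)%C.
Proof. reflexivity. Qed.

Lemma Gamma_LDfactor_pos n :
  0 < Gamma (INR n + 2) /\ 0 < Gamma (2 - alpha) /\ 0 < Gamma (INR n + 2 - alpha).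
Proof. pose proof (pos_INR n). repeat split; apply Gamma_pos; lra. Qed.

Lemma LDfactor_pos n : 0 < LDfactor n.
Proof.
  destruct (Gamma_LDfactor_pos n) as [? [? ?]]. unfold LDfactor.
  apply Rdiv_lt_0_compat; [apply Rmult_lt_0_compat|]; assumption.
Qed.

Lemma Ecoef_S n : Ecoef alpha (S n) * LDfactor n = Ecoef alpha n.
Proof.
  cbn [Ecoef]. replace (INR (S n) + 1) with (INR n + 2) by (rewrite S_INR; ring).
  destruct (Gamma_LDfactor_pos n) as [? [? ?]]. unfold LDfactor. field. lra.
Qed.

Lemma Ecoef_pos n : 0 < Ecoef alpha n.
Proof.
  induction n as [|n IHn]; [simpl; lra|].
  apply (Rmult_lt_reg_r (LDfactor n)); [apply LDfactor_pos|].
  rewrite Ecoef_S, Rmult_0_l. exact IHn.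
Qed.

Lemma inv_LDfactor_lim : is_lim_seq (fun n => / LDfactor n) 0.
Proof.
  replace (Finite 0) with (Rbar_mult 0 (/ Gamma (2 - alpha))) by (simpl; f_equal; ring).
  apply (is_lim_seq_ext (fun n => Gamma (INR n + 2 - alpha) / Gamma (INR n + 2) * / Gamma (2 - alpha))).
  - intros n. destruct (Gamma_LDfactor_pos n) as [? [? ?]]. unfold LDfactor. field. lra.
  - apply is_lim_seq_scal_r, Gamma_ratio_lim, alpha_range.
Qed.

Lemma LDfactor_geom_bound : exists K Q, 0 <= K /\ 0 < Q /\ forall n, LDfactor n <= K * Q ^ n.
Proof.
  exists (8 * exp 2 * Gamma (2 - alpha)), (4 * exp 1).
  pose proof (exp_pos 1). pose proof (exp_pos 2). destruct (Gamma_LDfactor_pos 0) as [_ [HG _]].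
  repeat split; [apply Rmult_le_pos; lra | lra |]. intros n.
  destruct (Gamma_LDfactor_pos n) as [? [? ?]].
  pose proof (Gamma_nat_upper n) as Hup.
  pose proof (Gamma_nat_sub_lower alpha n ltac:(lra)) as Hlow.
  assert (Hexp : exp (- (INR n + 2)) * (exp 2 * exp 1 ^ n) = 1).
  { rewrite <- exp_INR, <- !exp_plus. replace (- (INR n + 2) + (2 + INR n)) with 0 by ring.
    apply exp_0. }
  assert (HSn : 0 < INR (S n) ^ n) by (apply pow_lt, lt_0_INR; lia).
  unfold LDfactor. apply Rle_div_l; [assumption|].
  apply Rle_trans with (8 * (4 * INR (S n)) ^ n * Gamma (2 - alpha)); [apply Rmult_le_compat_r; lra|].
  apply Rle_trans with (8 * exp 2 * Gamma (2 - alpha) * (4 * exp 1) ^ n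
                        * (INR (S n) ^ n * exp (- (INR n + 2)))).
  - right. rewrite !Rpow_mult_distr.
    transitivity (8 * 4 ^ n * INR (S n) ^ n * Gamma (2 - alpha)
                  * (exp (- (INR n + 2)) * (exp 2 * exp 1 ^ n))); [rewrite Hexp; ring | ring].
  - apply Rmult_le_compat_l; [|exact Hlow].
    apply Rmult_le_pos; [apply Rmult_le_pos; lra | apply pow_le; lra].
Qed.

Lemma ex_series_Ecoef M : 0 < M -> ex_series (fun n => Ecoef alpha n * M ^ n).
Proof.
  intros HM.
  assert (Hpos : forall n, 0 < Ecoef alpha n * M ^ n)
    by (intros n; apply Rmult_lt_0_compat; [apply Ecoef_pos | apply pow_lt, HM]).
  apply (ex_series_ext (fun n => Rabs (Ecoef alpha n * M ^ n))).
  { intros n. apply Rabs_pos_eq, Rlt_le, Hpos. }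
  apply (ex_series_DAlembert _ 0); [lra | intros n; apply Rgt_not_eq, Hpos |].
  apply (is_lim_seq_ext (fun n => M * / LDfactor n)).
  - intros n. rewrite Rabs_pos_eq by (apply Rlt_le, Rdiv_lt_0_compat; apply Hpos).
    rewrite <- (Ecoef_S n). pose proof (LDfactor_pos n). pose proof (Ecoef_pos (S n)).
    pose proof (pow_lt M n HM). rewrite <- tech_pow_Rmult. field. repeat split; lra.
  - replace (Finite 0) with (Rbar_mult M 0) by (simpl; f_equal; ring).
    apply is_lim_seq_scal_l, inv_LDfactor_lim.
Qed.

End LDfactor.

(** * Jordan chains of LD - lambda on coefficient sequences *)

Fixpoint ffact (n k : nat) : nat :=
  match k, n with
  | O, _ => 1
  | S _, O => 0
  | S k', S n' => n * ffact n' k'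
  end.

Lemma ffact_0_r n : ffact n 0 = 1%nat.
Proof. destruct n; reflexivity. Qed.

Lemma ffact_lt n k : (n < k)%nat -> ffact n k = 0%nat.
Proof.
  revert k. induction n as [|n IHn]; intros [|k] Hk; try lia; [reflexivity|].
  simpl. rewrite IHn by lia. lia.
Qed.

Lemma ffact_SS n k : ffact (S n) (S k) = (ffact n (S k) + S k * ffact n k)%nat.
Proof.
  revert k. induction n as [|n IHn]; intros k.
  - destruct k; simpl; lia.
  - destruct k as [|k].
    + change (ffact (S (S n)) 1) with (S (S n) * ffact (S n) 0)%nat.
      change (ffact (S n) 1) with (S n * ffact n 0)%nat. rewrite !ffact_0_r. lia.
    + change (ffact (S (S n)) (S (S k))) with (S (S n) * ffact (S n) (S k))%nat.
      change (ffact (S n) (S (S k))) with (S n * ffact n (S k))%nat.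
      specialize (IHn k). change (ffact (S n) (S k)) with (S n * ffact n k)%nat in *. nia.
Qed.

Lemma fact_ffact n k : fact (k + n) = (ffact (k + n) k * fact n)%nat.
Proof.
  induction k as [|k IHk]; [rewrite ffact_0_r; simpl; lia|].
  change (fact (S k + n)) with (S (k + n) * fact (k + n))%nat. rewrite IHk.
  change (ffact (S k + n) (S k)) with (S (k + n) * ffact (k + n) k)%nat. lia.
Qed.

Lemma ffact_le_pow n k : (ffact n k <= n ^ k)%nat.
Proof.
  revert k. induction n as [|n IHn]; intros [|k]; simpl; try lia.
  specialize (IHn k). pose proof (Nat.pow_le_mono_l n (S n) k ltac:(lia)). nia.
Qed.

Lemma ffact_le_fact_exp n k : INR (ffact n k) <= INR (fact k) * exp 1 ^ n.
Proof.
  apply Rle_trans with (INR n ^ k); [rewrite <- pow_INR; apply le_INR, ffact_le_pow|].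
  rewrite <- exp_INR. apply pow_le_fact_exp, pos_INR.
Qed.

Definition root_mult (lam : nat -> CC) (mult : nat -> nat) (L : list nat) (v : CC) : nat :=
  fold_right (fun l acc => ((if Ceq_dec v (lam l) then mult l else 0) + acc)%nat) 0%nat L.

Lemma root_mult_seq_S lam mult r v : root_mult lam mult (seq 0 (S r)) v
  = (root_mult lam mult (seq 0 r) v + if Ceq_dec v (lam r) then mult r else 0)%nat.
Proof.
  unfold root_mult. rewrite seq_S, fold_right_app. simpl.
  generalize (seq 0 r). intros L. induction L as [|l L IHL]; simpl; lia.
Qed.

Lemma root_mult_none lam mult r v : (forall l, (l < r)%nat -> lam l <> v) ->
  root_mult lam mult (seq 0 r) v = 0%nat.
Proof.
  induction r as [|r IHr]; intros H; [reflexivity|].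
  rewrite root_mult_seq_S, IHr by (intros; apply H; lia).
  destruct (Ceq_dec v (lam r)) as [E|]; [exfalso; apply (H r); auto | reflexivity].
Qed.

Lemma root_mult_root lam mult r l0 :
  (forall i j, (i < r)%nat -> (j < r)%nat -> lam i = lam j -> i = j) -> (l0 < r)%nat ->
  root_mult lam mult (seq 0 r) (lam l0) = mult l0.
Proof.
  induction r as [|r IHr]; intros Hinj Hl0; [lia|].
  rewrite root_mult_seq_S. destruct (Nat.eq_dec l0 r) as [->|Hne].
  - rewrite root_mult_none.
    + destruct (Ceq_dec (lam r) (lam r)); [lia | contradiction].
    + intros l Hl E. apply Hinj in E; lia.
  - rewrite IHr by (auto; lia). destruct (Ceq_dec (lam l0) (lam r)) as [E|]; [|lia].
    apply Hinj in E; lia.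
Qed.

Lemma root_mult_witness lam mult r v k :
  (forall i j, (i < r)%nat -> (j < r)%nat -> lam i = lam j -> i = j) ->
  (k < root_mult lam mult (seq 0 r) v)%nat -> exists l, (l < r)%nat /\ lam l = v /\ (k < mult l)%nat.
Proof.
  intros Hinj Hk. destruct (classic (exists l, (l < r)%nat /\ lam l = v)) as [[l [Hl <-]]|Hno].
  - rewrite root_mult_root in Hk by assumption. exists l. auto.
  - rewrite root_mult_none in Hk; [lia|]. intros l Hl E. apply Hno. exists l. auto.
Qed.

Section JordanChains.
Variable alpha : R.
Hypothesis alpha_range : 0 < alpha < 1.

(* The coefficients of [t^k E^(k)(lam t)]; the factor [ffact n k] vanishes for [n < k], where the
   truncated subtraction [n - k] is meaningless. *)
Definition Ebasis_coef (k : nat) (lam : CC) (n : nat) : CC :=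
  (RtoC (Ecoef alpha n * INR (ffact n k)) * lam ^ (n - k))%C.

Lemma Ebasis_coef_S k lam n :
  (Ebasis_coef k lam (S n) * RtoC (LDfactor alpha n))%C
  = (RtoC (Ecoef alpha n * INR (ffact (S n) k)) * lam ^ (S n - k))%C.
Proof.
  unfold Ebasis_coef. rewrite <- (Ecoef_S alpha alpha_range n), !RtoC_mult. ring.
Qed.

Lemma LDsub_Ebasis_coef lam0 k lam n :
  LDsub alpha lam0 (Ebasis_coef k lam) n
  = ((lam - lam0) * Ebasis_coef k lam n + RtoC (INR k) * Ebasis_coef (pred k) lam n)%C.
Proof.
  rewrite LDsub_eq, Ebasis_coef_S. unfold Ebasis_coef.
  destruct k as [|k].
  - rewrite !ffact_0_r, !Nat.sub_0_r. simpl (INR 0). simpl Cpow. rewrite !RtoC_mult. ring.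
  - simpl pred. rewrite ffact_SS, plus_INR, mult_INR. simpl (S n - S k)%nat.
    destruct (Nat.lt_ge_cases n (S k)) as [Hlt|Hge].
    + rewrite (ffact_lt n (S k) Hlt). rewrite !RtoC_mult, !RtoC_plus, !RtoC_mult. simpl (INR 0). ring.
    + replace (n - k)%nat with (S (n - S k)) by lia. simpl Cpow.
      rewrite !RtoC_mult, !RtoC_plus, !RtoC_mult. ring.
Qed.

Lemma LDsub_add lam u v n :
  LDsub alpha lam (fun m => u m + v m)%C n = (LDsub alpha lam u n + LDsub alpha lam v n)%C.
Proof. rewrite !LDsub_eq. ring. Qed.

Lemma LDsub_scal lam c u n : LDsub alpha lam (fun m => c * u m)%C n = (c * LDsub alpha lam u n)%C.
Proof. rewrite !LDsub_eq. ring. Qed.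

Lemma LDsub_zero lam n : LDsub alpha lam (fun _ => 0%C) n = 0%C.
Proof. rewrite LDsub_eq. ring. Qed.

Lemma RtoC_LDfactor_neq0 n : RtoC (LDfactor alpha n) <> 0%C.
Proof. intros H. apply RtoC_inj in H. pose proof (LDfactor_pos alpha alpha_range n). lra. Qed.

(* Both sides solve the first-order recursion [LDsub lam z = 0] and agree at [0]. *)
Lemma LDsub_kernel lam z : (forall n, LDsub alpha lam z n = 0%C) ->
  forall n, z n = (z 0%nat * Ebasis_coef 0 lam n)%C.
Proof.
  intros Hz n. induction n as [|n IHn].
  - unfold Ebasis_coef. rewrite ffact_0_r. simpl. rewrite Rmult_1_r. ring.
  - pose proof (Hz n) as Hzn. pose proof (LDsub_Ebasis_coef lam 0 lam n) as Hb.
    rewrite LDsub_eq in Hzn, Hb. pose proof (RtoC_LDfactor_neq0 n) as HL.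
    set (L := RtoC (LDfactor alpha n)) in *. set (B := Ebasis_coef 0 lam) in *.
    transitivity ((z (S n) * L - lam * z n + lam * z n) / L)%C; [field; exact HL|].
    replace (B (S n)) with ((B (S n) * L - lam * B n + lam * B n) / L)%C by (field; exact HL).
    rewrite Hzn, Hb, IHn. simpl (INR 0). field. exact HL.
Qed.

(* [N lam] is the length of the Jordan chain [Ebasis_coef k lam], [k < N lam], admitted at [lam]. *)
Inductive in_span (N : CC -> nat) : (nat -> CC) -> Prop :=
  | span_zero : in_span N (fun _ => 0%C)
  | span_basis k lam : (k < N lam)%nat -> in_span N (Ebasis_coef k lam)
  | span_add u v : in_span N u -> in_span N v -> in_span N (fun n => u n + v n)%C
  | span_scal c u : in_span N u -> in_span N (fun n => c * u n)%C.

Lemma in_span_mono N N' u : (forall v, (N v <= N' v)%nat) -> in_span N u -> in_span N' u.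
Proof.
  intros HN Hu. induction Hu.
  - apply span_zero.
  - apply span_basis. specialize (HN lam). lia.
  - apply span_add; assumption.
  - apply span_scal; assumption.
Qed.

Lemma in_span_ext N u v : in_span N u -> (forall n, u n = v n) -> in_span N v.
Proof. intros Hu E. replace v with u; [exact Hu | apply functional_extensionality, E]. Qed.

Definition add_root (N : CC -> nat) (lam : CC) (m : nat) : CC -> nat :=
  fun v => (N v + if Ceq_dec v lam then m else 0)%nat.

Lemma add_root_same N lam m : add_root N lam m lam = (N lam + m)%nat.
Proof. unfold add_root. destruct (Ceq_dec lam lam); [reflexivity | contradiction]. Qed.

(* Away from resonance [LDsub lam] is invertible on each Jordan chain, triangularly in [k]. *)
Lemma LDsub_preimage_basis N lam v k : v <> lam -> (k < N v)%nat ->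
  exists w, in_span N w /\ forall n, LDsub alpha lam w n = Ebasis_coef k v n.
Proof.
  intros Hv. assert (Hd : (v - lam)%C <> 0%C) by (apply Cminus_eq_contra, Hv).
  induction k as [|k IHk]; intros Hk.
  - exists (fun n => / (v - lam) * Ebasis_coef 0 v n)%C. split.
    + apply span_scal, span_basis, Hk.
    + intros n. rewrite LDsub_scal, LDsub_Ebasis_coef. simpl (INR 0). field. exact Hd.
  - destruct (IHk ltac:(lia)) as [w [Hw Ew]].
    exists (fun n => / (v - lam) * (Ebasis_coef (S k) v n + - RtoC (INR (S k)) * w n))%C. split.
    + apply span_scal, span_add; [apply span_basis, Hk | apply span_scal, Hw].
    + intros n. rewrite LDsub_scal, LDsub_add, LDsub_scal, LDsub_Ebasis_coef, Ew. simpl pred.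
      field. exact Hd.
Qed.

Lemma LDsub_preimage N lam y : in_span N y ->
  exists w, in_span (add_root N lam 1) w /\ forall n, LDsub alpha lam w n = y n.
Proof.
  intros Hy. induction Hy as [|k v Hk|u1 u2 _ [w1 [H1 E1]] _ [w2 [H2 E2]]|c u _ [w [Hw Ew]]].
  - exists (fun _ => 0%C). split; [apply span_zero | intros n; apply LDsub_zero].
  - destruct (Ceq_dec v lam) as [->|Hne].
    + assert (Hk1 : RtoC (INR (S k)) <> 0%C).
      { intros E. apply RtoC_inj in E. pose proof (lt_0_INR (S k) (Nat.lt_0_succ k)). lra. }
      exists (fun n => / RtoC (INR (S k)) * Ebasis_coef (S k) lam n)%C. split.
      * apply span_scal, span_basis. rewrite add_root_same. lia.
      * intros n. rewrite LDsub_scal, LDsub_Ebasis_coef. simpl pred. field. exact Hk1.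
    + destruct (LDsub_preimage_basis N lam v k Hne Hk) as [w [Hw Ew]].
      exists w. split; [|exact Ew]. apply (in_span_mono N); [intros; unfold add_root; lia | exact Hw].
  - exists (fun n => w1 n + w2 n)%C. split; [apply span_add; assumption|].
    intros n. rewrite LDsub_add, E1, E2. reflexivity.
  - exists (fun n => c * w n)%C. split; [apply span_scal, Hw|].
    intros n. rewrite LDsub_scal, Ew. reflexivity.
Qed.

Lemma in_span_of_LDsub N lam u : in_span N (LDsub alpha lam u) -> in_span (add_root N lam 1) u.
Proof.
  intros H. destruct (LDsub_preimage N lam _ H) as [w [Hw Ew]].
  set (z := fun n => (u n - w n)%C).
  assert (Hz : forall n, LDsub alpha lam z n = 0%C).
  { intros n. specialize (Ew n). rewrite !LDsub_eq in *. unfold z.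
    symmetry in Ew. apply Ceq_minus in Ew. rewrite <- Ew. ring. }
  apply in_span_ext with (fun n => w n + z 0%nat * Ebasis_coef 0 lam n)%C.
  - apply span_add, span_scal, span_basis; [exact Hw|]. rewrite add_root_same. lia.
  - intros n. rewrite <- (LDsub_kernel lam z Hz). unfold z. ring.
Qed.

Lemma in_span_of_LDsub_iter m N lam u :
  in_span N (Nat.iter m (LDsub alpha lam) u) -> in_span (add_root N lam m) u.
Proof.
  revert N u. induction m as [|m IHm]; intros N u H; simpl in H.
  - eapply in_span_mono; [|exact H]. intros v. unfold add_root. lia.
  - apply in_span_of_LDsub, IHm in H. eapply in_span_mono; [|exact H].
    intros v. unfold add_root. destruct (Ceq_dec v lam); lia.
Qed.

Lemma in_span_of_LDpoly lam mult L N x :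
  in_span N (fold_right (fun l acc => Nat.iter (mult l) (LDsub alpha (lam l)) acc) x L) ->
  in_span (fun v => (N v + root_mult lam mult L v)%nat) x.
Proof.
  revert N. induction L as [|l L IHL]; intros N H; simpl in H.
  - eapply in_span_mono; [|exact H]. intros v. simpl. lia.
  - apply in_span_of_LDsub_iter, IHL in H. eapply in_span_mono; [|exact H].
    intros v. unfold add_root. simpl. destruct (Ceq_dec v (lam l)); lia.
Qed.
End JordanChains.

(** * Entire coefficient sequences *)

Lemma is_series_R0 : is_series (fun _ : nat => 0) 0.
Proof.
  apply (filterlim_ext (fun _ => 0)); [intros N; rewrite sum_n_const; ring | apply filterlim_const].
Qed.

Lemma ex_series_le_nonneg (a b : nat -> R) : (forall n, 0 <= a n <= b n) -> ex_series b -> ex_series a.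
Proof.
  intros H Hb. apply (ex_series_le a b); [|exact Hb].
  intros n. change (norm (a n)) with (Rabs (a n)). rewrite Rabs_pos_eq; apply H.
Qed.

Lemma Rabs_Im_le_Cmod z : Rabs (Im z) <= Cmod z.
Proof.
  rewrite <- Rabs_Ropp, <- re_mult_Ci, <- (Rmult_1_r (Cmod z)), <- Cmod_Ci, <- Cmod_mult.
  apply re_le_Cmod.
Qed.

Lemma Cmod_le_Rabs_Re_Im z : Cmod z <= Rabs (Re z) + Rabs (Im z).
Proof.
  pose proof (Cmod2_alt z). pose proof (Cmod_ge_0 z).
  pose proof (Rabs_pos (Re z)). pose proof (Rabs_pos (Im z)).
  rewrite <- (pow2_abs (Re z)), <- (pow2_abs (Im z)) in *. nra.
Qed.

Lemma C_eq_Re_Im (z w : CC) : Re z = Re w -> Im z = Im w -> z = w.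
Proof. destruct z, w. simpl. intros -> ->. reflexivity. Qed.

Definition abs_entire (a : nat -> CC) : Prop :=
  forall R, 0 <= R -> ex_series (fun n => Cmod (a n) * R ^ n).

Lemma abs_entire_ext a b : abs_entire a -> (forall n, a n = b n) -> abs_entire b.
Proof.
  intros Ha E R HR. apply (ex_series_ext (fun n => Cmod (a n) * R ^ n)); [|exact (Ha R HR)].
  intros n. rewrite E. reflexivity.
Qed.

Lemma abs_entire_zero : abs_entire (fun _ => 0%C).
Proof.
  intros R HR. apply (ex_series_ext (fun _ => 0)); [|exists 0; exact is_series_R0].
  intros n. rewrite Cmod_0, Rmult_0_l. reflexivity.
Qed.

Lemma abs_entire_add a b : abs_entire a -> abs_entire b -> abs_entire (fun n => a n + b n)%C.
Proof.
  intros Ha Hb R HR.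
  apply ex_series_le_nonneg with (fun n => Cmod (a n) * R ^ n + Cmod (b n) * R ^ n).
  - intros n. pose proof (pow_le R n HR). pose proof (Cmod_triangle (a n) (b n)).
    split; [apply Rmult_le_pos; [apply Cmod_ge_0 | exact H]|]. nra.
  - apply (ex_series_plus (V:=R_NormedModule)); auto.
Qed.

Lemma abs_entire_scal c a : abs_entire a -> abs_entire (fun n => c * a n)%C.
Proof.
  intros Ha R HR. apply (ex_series_ext (fun n => scal (Cmod c) (Cmod (a n) * R ^ n))).
  - intros n. rewrite Cmod_mult. symmetry. apply Rmult_assoc.
  - apply (ex_series_scal (V:=R_NormedModule)), Ha, HR.
Qed.

Section EntireCoefficients.
Variable alpha : R.
Hypothesis alpha_range : 0 < alpha < 1.

Lemma abs_entire_Ebasis_coef k lam : abs_entire (Ebasis_coef alpha k lam).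
Proof.
  intros R HR.
  set (M := exp 1 * (Cmod lam + 1) * (R + 1)).
  pose proof (exp_pos 1). pose proof (Cmod_ge_0 lam).
  assert (HM : 0 < M) by (unfold M; apply Rmult_lt_0_compat; [apply Rmult_lt_0_compat|]; lra).
  apply ex_series_le_nonneg with (fun n => scal (INR (fact k)) (Ecoef alpha n * M ^ n)).
  - intros n. pose proof (pow_le R n HR) as HRn.
    split; [apply Rmult_le_pos; [apply Cmod_ge_0 | exact HRn]|].
    change (scal ?c ?y) with (c * y). unfold Ebasis_coef.
    rewrite Cmod_mult, Cmod_pow, Cmod_R.
    pose proof (Ecoef_pos alpha alpha_range n) as He. pose proof (pos_INR (ffact n k)).
    rewrite Rabs_pos_eq by (apply Rmult_le_pos; lra).
    assert (Hlam : Cmod lam ^ (n - k) <= (Cmod lam + 1) ^ n).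
    { apply Rle_trans with ((Cmod lam + 1) ^ (n - k)); [apply pow_incr; lra|].
      apply Rle_pow; [lra | lia]. }
    assert (HR1 : R ^ n <= (R + 1) ^ n) by (apply pow_incr; lra).
    pose proof (ffact_le_fact_exp n k) as Hff.
    pose proof (pow_le (Cmod lam) (n - k) H0).
    assert (INR (ffact n k) * Cmod lam ^ (n - k) * R ^ n
            <= INR (fact k) * exp 1 ^ n * (Cmod lam + 1) ^ n * (R + 1) ^ n).
    { apply Rmult_le_compat; [apply Rmult_le_pos; lra | exact HRn | | exact HR1].
      apply Rmult_le_compat; lra. }
    unfold M. rewrite !Rpow_mult_distr.
    replace (Ecoef alpha n * INR (ffact n k) * Cmod lam ^ (n - k) * R ^ n)
      with (Ecoef alpha n * (INR (ffact n k) * Cmod lam ^ (n - k) * R ^ n)) by ring.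
    replace (INR (fact k) * (Ecoef alpha n * (exp 1 ^ n * (Cmod lam + 1) ^ n * (R + 1) ^ n)))
      with (Ecoef alpha n * (INR (fact k) * exp 1 ^ n * (Cmod lam + 1) ^ n * (R + 1) ^ n)) by ring.
    apply Rmult_le_compat_l; lra.
  - apply (ex_series_scal (V:=R_NormedModule)), ex_series_Ecoef; assumption.
Qed.

Lemma abs_entire_LD a : abs_entire a -> abs_entire (LD alpha a).
Proof.
  intros Ha R HR.
  destruct (LDfactor_geom_bound alpha alpha_range) as [K [Q [HK [HQ Hbound]]]].
  set (R' := Q * R + 1).
  assert (HR' : 1 <= R') by (unfold R'; nra).
  apply ex_series_le_nonneg with (fun n => scal K (Cmod (a (S n)) * R' ^ S n)).
  - intros n. pose proof (pow_le R n HR). pose proof (Cmod_ge_0 (a (S n))).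
    split; [apply Rmult_le_pos; [apply Cmod_ge_0 | assumption]|].
    change (scal ?c ?y) with (c * y). unfold LD.
    rewrite Cmod_mult, Cmod_R, Rabs_pos_eq by (apply Rlt_le, (LDfactor_pos alpha alpha_range n)).
    fold (LDfactor alpha n).
    assert (HQR : Q ^ n * R ^ n <= R' ^ S n).
    { rewrite <- Rpow_mult_distr. apply Rle_trans with (R' ^ n); [apply pow_incr; unfold R'; nra|].
      simpl. pose proof (pow_le R' n ltac:(lra)). nra. }
    assert (LDfactor alpha n * R ^ n <= K * R' ^ S n).
    { apply Rle_trans with (K * Q ^ n * R ^ n); [apply Rmult_le_compat_r; auto|].
      rewrite Rmult_assoc. apply Rmult_le_compat_l; assumption. }
    rewrite Rmult_assoc.
    replace (K * (Cmod (a (S n)) * R' ^ S n)) with (Cmod (a (S n)) * (K * R' ^ S n)) by ring.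
    apply Rmult_le_compat_l; assumption.
  - apply (ex_series_scal (V:=R_NormedModule)).
    apply (ex_series_incr_1 (fun n => Cmod (a n) * R' ^ n)), Ha. lra.
Qed.

Lemma abs_entire_LDsub lam a : abs_entire a -> abs_entire (LDsub alpha lam a).
Proof.
  intros Ha. apply abs_entire_ext with (fun n => LD alpha a n + (- lam) * a n)%C.
  - apply abs_entire_add; [apply abs_entire_LD | apply abs_entire_scal]; exact Ha.
  - intros n. unfold LDsub. ring.
Qed.

Lemma abs_entire_LDpoly r lam mult a : abs_entire a -> abs_entire (LDpoly alpha r lam mult a).
Proof.
  intros Ha. unfold LDpoly. induction (seq 0 r) as [|l L IHL]; simpl; [exact Ha|].
  induction (mult l) as [|m IHm]; simpl; [exact IHL | apply abs_entire_LDsub, IHm].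
Qed.

Lemma abs_entire_of_in_span N u : in_span alpha N u -> abs_entire u.
Proof.
  intros Hu. induction Hu.
  - apply abs_entire_zero.
  - apply abs_entire_Ebasis_coef.
  - apply abs_entire_add; assumption.
  - apply abs_entire_scal; assumption.
Qed.
End EntireCoefficients.

Lemma ex_series_proj_pseries (p : CC -> R) a t : (forall z, Rabs (p z) <= Cmod z) ->
  abs_entire a -> ex_series (fun n => p (a n * RtoC t ^ n)%C).
Proof.
  intros Hp Ha.
  apply (ex_series_le (K:=R_AbsRing) (V:=R_CompleteNormedModule) _ (fun n => Cmod (a n) * Rabs t ^ n)).
  - intros n. eapply Rle_trans; [apply Hp|]. rewrite Cmod_mult, Cmod_pow, Cmod_R. apply Rle_refl.
  - apply Ha, Rabs_pos.
Qed.

Lemma Re_pseries_eval a t : Re (pseries_eval a t) = Series (fun n => Re (a n * RtoC t ^ n)%C).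
Proof. reflexivity. Qed.

Lemma Im_pseries_eval a t : Im (pseries_eval a t) = Series (fun n => Im (a n * RtoC t ^ n)%C).
Proof. reflexivity. Qed.

Lemma pseries_eval_add a b t : abs_entire a -> abs_entire b ->
  pseries_eval (fun n => a n + b n)%C t = (pseries_eval a t + pseries_eval b t)%C.
Proof.
  intros Ha Hb. pose proof re_le_Cmod. pose proof Rabs_Im_le_Cmod.
  apply C_eq_Re_Im;
    [rewrite re_plus, !Re_pseries_eval | rewrite im_plus, !Im_pseries_eval];
    rewrite <- Series_plus by (apply ex_series_proj_pseries; auto);
    apply Series_ext; intros n; rewrite Cmult_plus_distr_r;
    [apply re_plus | apply im_plus].
Qed.

Lemma pseries_eval_scal c a t : abs_entire a ->
  pseries_eval (fun n => c * a n)%C t = (c * pseries_eval a t)%C.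
Proof.
  intros Ha. pose proof (ex_series_proj_pseries Re a t re_le_Cmod Ha) as HRe.
  pose proof (ex_series_proj_pseries Im a t Rabs_Im_le_Cmod Ha) as HIm.
  apply C_eq_Re_Im.
  - rewrite re_mult, !Re_pseries_eval, Im_pseries_eval, <- !Series_scal_l, <- Series_minus
      by (apply (ex_series_scal (V:=R_NormedModule)); assumption).
    apply Series_ext. intros n. rewrite <- Cmult_assoc, re_mult. reflexivity.
  - rewrite im_mult, !Im_pseries_eval, Re_pseries_eval, <- !Series_scal_l, <- Series_plus
      by (apply (ex_series_scal (V:=R_NormedModule)); assumption).
    apply Series_ext. intros n. rewrite <- Cmult_assoc, im_mult. reflexivity.
Qed.

Lemma pseries_eval_zero t : pseries_eval (fun _ => 0%C) t = 0%C.
Proof.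
  apply C_eq_Re_Im; [rewrite Re_pseries_eval | rewrite Im_pseries_eval];
    rewrite (Series_ext _ (fun _ => 0)), (is_series_unique _ _ is_series_R0);
    try reflexivity; intros n; rewrite Cmult_0_l; reflexivity.
Qed.

Lemma Rabs_le_scaled_eq0 (c M : R) : (forall t, 0 < t <= 1 -> Rabs c <= t * M) -> c = 0.
Proof.
  intros H. destruct (Req_dec c 0) as [|Hc]; [assumption|]. exfalso.
  pose proof (Rabs_pos_lt c Hc) as Hpos. pose proof (H 1 ltac:(lra)) as H1.
  set (t := Rmin 1 (Rabs c / (2 * (Rabs M + 1)))).
  assert (Ht : 0 < t <= 1).
  { pose proof (Rabs_pos M).
    split; [apply Rmin_glb_lt; [lra | apply Rdiv_lt_0_compat; lra] | apply Rmin_l]. }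
  assert (Htc : t * (2 * (Rabs M + 1)) <= Rabs c).
  { pose proof (Rmin_r 1 (Rabs c / (2 * (Rabs M + 1)))). pose proof (Rabs_pos M).
    apply Rle_div_r; [lra | assumption]. }
  pose proof (H t Ht). pose proof (Rle_abs M). pose proof (Rabs_pos M). nra.
Qed.

Section PowerSeriesIdentity.
Variable p : nat -> R.
Hypothesis p_abs : forall R, 0 <= R -> ex_series (fun n => Rabs (p n) * R ^ n).

Lemma ex_series_abs_shift k R : 0 <= R -> ex_series (fun n => Rabs (p (n + k)) * R ^ n).
Proof.
  intros HR. set (R1 := R + 1).
  assert (HR1 : 0 < R1) by (unfold R1; lra).
  apply ex_series_le_nonneg with (fun n => Rabs (p (n + k)) * R1 ^ n).
  - intros n. pose proof (Rabs_pos (p (n + k))). pose proof (pow_le R n HR).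
    split; [apply Rmult_le_pos; assumption|].
    apply Rmult_le_compat_l; [assumption|]. apply pow_incr. unfold R1; lra.
  - apply (ex_series_ext (fun n => scal (/ R1 ^ k) (Rabs (p (k + n)) * R1 ^ (k + n)))).
    + intros n. unfold scal; simpl; unfold mult; simpl. rewrite pow_add, (Nat.add_comm k n).
      pose proof (pow_lt R1 k HR1). field. lra.
    + apply (ex_series_scal (V:=R_NormedModule)).
      apply (ex_series_incr_n (fun n => Rabs (p n) * R1 ^ n) k), p_abs. lra.
Qed.

Lemma ex_series_shift k t : ex_series (fun n => p (n + k) * t ^ n).
Proof.
  apply ex_series_Rabs, (ex_series_ext (fun n => Rabs (p (n + k)) * Rabs t ^ n)).
  - intros n. rewrite Rabs_mult, RPow_abs. reflexivity.
  - apply ex_series_abs_shift, Rabs_pos.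
Qed.

Lemma Series_shift_bounded k : exists M, forall t, 0 < t <= 1 ->
  Rabs (Series (fun n => p (n + k) * t ^ n)) <= M.
Proof.
  exists (Series (fun n => Rabs (p (n + k)) * 1 ^ n)). intros t Ht.
  eapply Rle_trans; [apply Series_Rabs|].
  - apply (ex_series_ext (fun n => Rabs (p (n + k)) * Rabs t ^ n)).
    + intros n. rewrite Rabs_mult, RPow_abs. reflexivity.
    + apply ex_series_abs_shift, Rabs_pos.
  - apply Series_le; [|apply ex_series_abs_shift; lra].
    intros n. split; [apply Rabs_pos|]. rewrite Rabs_mult, <- RPow_abs.
    apply Rmult_le_compat_l; [apply Rabs_pos|]. apply pow_incr. rewrite Rabs_pos_eq; lra.
Qed.

Lemma Series_shift_S k t :
  Series (fun n => p (n + k) * t ^ n) = p k + t * Series (fun n => p (n + S k) * t ^ n).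
Proof.
  rewrite Series_incr_1 by apply ex_series_shift. rewrite <- Series_scal_l. simpl. f_equal; [ring|].
  apply Series_ext. intros n. rewrite <- plus_n_Sm. simpl. ring.
Qed.

(* If [p k + t * S(t)] vanishes for [t > 0] with [S] bounded near [0], then [p k = 0], and so [S]
   vanishes too. *)
Lemma Series_shift_vanish k : (forall t, 0 < t -> Series (fun n => p (n + k) * t ^ n) = 0) ->
  p k = 0 /\ forall t, 0 < t -> Series (fun n => p (n + S k) * t ^ n) = 0.
Proof.
  intros H. destruct (Series_shift_bounded (S k)) as [M HM].
  assert (Hk : p k = 0).
  { apply (Rabs_le_scaled_eq0 _ M). intros t Ht.
    specialize (H t (proj1 Ht)). rewrite Series_shift_S in H.
    replace (p k) with (- (t * Series (fun n => p (n + S k) * t ^ n))) by lra.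
    rewrite Rabs_Ropp, Rabs_mult, Rabs_pos_eq by lra.
    apply Rmult_le_compat_l; [lra | apply HM, Ht]. }
  split; [exact Hk|]. intros t Ht.
  specialize (H t Ht). rewrite Series_shift_S, Hk, Rplus_0_l in H.
  destruct (Rmult_integral _ _ H); [lra | assumption].
Qed.

Lemma power_series_identity : (forall t, 0 < t -> Series (fun n => p n * t ^ n) = 0) ->
  forall n, p n = 0.
Proof.
  intros H.
  assert (Hk : forall k t, 0 < t -> Series (fun n => p (n + k) * t ^ n) = 0).
  { induction k as [|k IHk].
    - intros t Ht. rewrite <- (H t Ht). apply Series_ext. intros n. rewrite Nat.add_0_r. reflexivity.
    - apply Series_shift_vanish, IHk. }
  intros n. apply (Series_shift_vanish n (Hk n)).
Qed.
End PowerSeriesIdentity.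

Lemma pseries_proj_identity (p : CC -> R) d :
  (forall z, Rabs (p z) <= Cmod z) -> (forall z r, p (z * RtoC r)%C = p z * r) -> abs_entire d ->
  (forall t, 0 < t -> Series (fun n => p (d n * RtoC t ^ n)%C) = 0) -> forall n, p (d n) = 0.
Proof.
  intros Hp Hscal Hd H. apply power_series_identity.
  - intros R HR. apply ex_series_le_nonneg with (fun n => Cmod (d n) * R ^ n); [|apply Hd, HR].
    intros n. pose proof (pow_le R n HR).
    split; [apply Rmult_le_pos; [apply Rabs_pos | assumption]|].
    apply Rmult_le_compat_r; [assumption | apply Hp].
  - intros t Ht. rewrite <- (H t Ht). apply Series_ext. intros n.
    rewrite <- RtoC_pow, Hscal. reflexivity.
Qed.

Lemma pseries_eval_identity d : abs_entire d ->
  (forall t, 0 < t -> pseries_eval d t = 0%C) -> forall n, d n = 0%C.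
Proof.
  intros Hd H n. apply C_eq_Re_Im.
  - apply (pseries_proj_identity Re d re_le_Cmod re_scal_r Hd).
    intros t Ht. rewrite <- Re_pseries_eval, H by exact Ht. reflexivity.
  - apply (pseries_proj_identity Im d Rabs_Im_le_Cmod im_scal_r Hd).
    intros t Ht. rewrite <- Im_pseries_eval, H by exact Ht. reflexivity.
Qed.

Lemma pseries_eval_inj a b : abs_entire a -> abs_entire b ->
  (forall t, 0 < t -> pseries_eval a t = pseries_eval b t) -> forall n, a n = b n.
Proof.
  intros Ha Hb H n.
  assert (Hd : abs_entire (fun n => a n + -1 * b n)%C)
    by (apply abs_entire_add, abs_entire_scal; assumption).
  assert (Hzero : forall t, 0 < t -> pseries_eval (fun n => a n + -1 * b n)%C t = 0%C).
  { intros t Ht.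
    rewrite pseries_eval_add, pseries_eval_scal, H by (try apply abs_entire_scal; assumption).
    ring. }
  apply Ceq_minus. rewrite <- (pseries_eval_identity _ Hd Hzero n). ring.
Qed.

Lemma Series_proj_scal_shift (p : CC -> R) (r : R) (k : nat) (b e : nat -> CC) :
  (forall r' z, p (RtoC r' * z)%C = r' * p z) -> (forall m, (m < k)%nat -> b m = 0%C) ->
  (forall n, b (k + n)%nat = (RtoC r * e n)%C) -> p (RtoC 0)%C = 0 ->
  Series (fun m => p (b m)) = r * Series (fun n => p (e n)).
Proof.
  intros Hscal Hlow Hhigh H0.
  rewrite (Series_incr_n_aux _ k) by (intros m Hm; rewrite Hlow by exact Hm; exact H0).
  rewrite <- Series_scal_l. apply Series_ext. intros n. rewrite Hhigh, Hscal. reflexivity.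
Qed.

Lemma Ebasis_pseries alpha k lam t : Ebasis alpha k lam t = pseries_eval (Ebasis_coef alpha k lam) t.
Proof.
  set (e := fun n => (RtoC (Ecoef alpha (n + k) * INR (fact (n + k)) / INR (fact n))
                      * (lam * RtoC t) ^ n)%C).
  assert (Hhigh : forall n,
    (Ebasis_coef alpha k lam (k + n) * RtoC t ^ (k + n))%C = (RtoC (t ^ k) * e n)%C).
  { intros n. unfold Ebasis_coef, e. replace (k + n - k)%nat with n by lia.
    replace (Ecoef alpha (k + n) * INR (ffact (k + n) k))
      with (Ecoef alpha (n + k) * INR (fact (n + k)) / INR (fact n))
      by (rewrite (Nat.add_comm n k), fact_ffact, mult_INR; field; apply INR_fact_neq_0).
    rewrite Cpow_add_r, Cpow_mult_l, RtoC_pow. ring. }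
  assert (Hlow : forall m, (m < k)%nat -> (Ebasis_coef alpha k lam m * RtoC t ^ m)%C = 0%C).
  { intros m Hm. unfold Ebasis_coef. rewrite ffact_lt by exact Hm. simpl (INR 0).
    rewrite Rmult_0_r, !Cmult_0_l. reflexivity. }
  unfold Ebasis, Eder. rewrite <- RtoC_pow. fold e. apply C_eq_Re_Im.
  - rewrite Re_pseries_eval, re_scal_l. symmetry.
    apply (Series_proj_scal_shift Re (t ^ k) k);
      [apply re_scal_l | exact Hlow | exact Hhigh | reflexivity].
  - rewrite Im_pseries_eval, im_scal_l. symmetry.
    apply (Series_proj_scal_shift Im (t ^ k) k);
      [apply im_scal_l | exact Hlow | exact Hhigh | reflexivity].
Qed.

Lemma sum_n_C (a : nat -> CC) N :
  sum_n a N = (sum_n (fun n => Re (a n)) N, sum_n (fun n => Im (a n)) N).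
Proof.
  induction N as [|N IHN]; [rewrite !sum_O; destruct (a 0%nat); reflexivity|].
  rewrite !sum_Sn, IHN. reflexivity.
Qed.

Lemma ex_series_Re_Im (a : nat -> CC) : @ex_series C_AbsRing C_NormedModule a ->
  ex_series (fun n => Re (a n)) /\ ex_series (fun n => Im (a n)).
Proof.
  intros [l Hl]. split.
  - exists (Re l). apply (filterlim_ext (fun N => Re (sum_n a N))).
    { intros N. rewrite sum_n_C. reflexivity. }
    eapply filterlim_comp; [exact Hl|]. intros P [eps HP]. exists eps. intros y [Hy _]. apply HP, Hy.
  - exists (Im l). apply (filterlim_ext (fun N => Im (sum_n a N))).
    { intros N. rewrite sum_n_C. reflexivity. }
    eapply filterlim_comp; [exact Hl|]. intros P [eps HP]. exists eps. intros y [_ Hy]. apply HP, Hy.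
Qed.

Lemma abs_entire_of_eventually_bounded a :
  (forall S, 0 < S -> exists N, forall n, (N <= n)%nat -> Cmod (a n) * S ^ n <= 2) -> abs_entire a.
Proof.
  intros Hb R HR. set (S := 2 * (R + 1)).
  destruct (Hb S ltac:(unfold S; lra)) as [N HN].
  apply (ex_series_incr_n _ N).
  apply ex_series_le_nonneg with (fun n => scal 2 ((/ 2) ^ (N + n))).
  - intros n. pose proof (pow_le R (N + n) HR). specialize (HN (N + n)%nat ltac:(lia)).
    split; [apply Rmult_le_pos; [apply Cmod_ge_0 | assumption]|].
    change (scal ?c ?y) with (c * y).
    assert (HRS : R ^ (N + n) = S ^ (N + n) * (/ 2) ^ (N + n) * (2 * R / S) ^ (N + n)).
    { rewrite <- !Rpow_mult_distr. f_equal. unfold S. field. lra. }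
    assert (Hq : 0 <= 2 * R / S <= 1).
    { unfold S. split; [apply Rdiv_le_0_compat; lra|]. apply Rle_div_l; lra. }
    assert ((2 * R / S) ^ (N + n) <= 1) by (rewrite <- (pow1 (N + n)); apply pow_incr; lra).
    pose proof (pow_le (2 * R / S) (N + n) (proj1 Hq)). pose proof (pow_le (/ 2) (N + n) ltac:(lra)).
    pose proof (Cmod_ge_0 (a (N + n)%nat)). pose proof (pow_le S (N + n) ltac:(unfold S; lra)).
    rewrite HRS. replace (Cmod (a (N + n)%nat) * (S ^ (N + n) * (/ 2) ^ (N + n) * (2 * R / S) ^ (N + n)))
      with (Cmod (a (N + n)%nat) * S ^ (N + n) * ((/ 2) ^ (N + n) * (2 * R / S) ^ (N + n))) by ring.
    apply Rmult_le_compat; [apply Rmult_le_pos; assumption | apply Rmult_le_pos; assumption |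
      exact HN |].
    rewrite <- (Rmult_1_r ((/ 2) ^ (N + n))) at 2. apply Rmult_le_compat_l; assumption.
  - apply (ex_series_scal (V:=R_NormedModule)), (ex_series_incr_n (fun n => (/ 2) ^ n) N).
    apply ex_series_geom. rewrite Rabs_pos_eq; lra.
Qed.

Lemma abs_entire_of_entire_coeffs x : entire_coeffs x -> abs_entire x.
Proof.
  intros Hx. apply abs_entire_of_eventually_bounded. intros S HS.
  destruct (ex_series_Re_Im _ (Hx (RtoC S))) as [HRe HIm].
  apply ex_series_lim_0, is_lim_seq_Reals in HRe. apply ex_series_lim_0, is_lim_seq_Reals in HIm.
  destruct (HRe 1 ltac:(lra)) as [N1 HN1]. destruct (HIm 1 ltac:(lra)) as [N2 HN2].
  exists (N1 + N2)%nat. intros n Hn.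
  specialize (HN1 n ltac:(lia)). specialize (HN2 n ltac:(lia)).
  unfold R_dist in *. rewrite Rminus_0_r, <- RtoC_pow in *.
  rewrite re_scal_r, Rabs_mult, (Rabs_pos_eq (S ^ n)) in HN1 by (apply pow_le; lra).
  rewrite im_scal_r, Rabs_mult, (Rabs_pos_eq (S ^ n)) in HN2 by (apply pow_le; lra).
  pose proof (Cmod_le_Rabs_Re_Im (x n)). pose proof (pow_le S n (Rlt_le _ _ HS)).
  assert (Cmod (x n) * S ^ n <= (Rabs (Re (x n)) + Rabs (Im (x n))) * S ^ n)
    by (apply Rmult_le_compat_r; assumption).
  lra.
Qed.

(** * Finite sums and the representation of solutions *)

Lemma fsum_0 (f : nat -> CC) : fsum 0 f = 0%C.
Proof. reflexivity. Qed.

Lemma fsum_S n (f : nat -> CC) : fsum (S n) f = (fsum n f + f n)%C.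
Proof.
  unfold fsum. rewrite seq_S, map_app, fold_right_app. simpl.
  generalize (map f (seq 0 n)). intros l. induction l as [|a l IHl]; simpl; [ring|].
  rewrite IHl. ring.
Qed.

Lemma fsum_ext K (f g : nat -> CC) : (forall i, (i < K)%nat -> f i = g i) -> fsum K f = fsum K g.
Proof.
  induction K as [|K IHK]; intros H; [reflexivity|].
  rewrite !fsum_S, (H K), IHK by (try (intros; apply H); lia). reflexivity.
Qed.

Lemma fsum_eq0 K (f : nat -> CC) : (forall i, (i < K)%nat -> f i = 0%C) -> fsum K f = 0%C.
Proof.
  induction K as [|K IHK]; intros H; [reflexivity|].
  rewrite fsum_S, H, IHK by (try (intros; apply H); lia). ring.
Qed.

Lemma fsum_plus K (f g : nat -> CC) : fsum K (fun i => f i + g i)%C = (fsum K f + fsum K g)%C.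
Proof. induction K as [|K IHK]; [rewrite !fsum_0; ring|]. rewrite !fsum_S, IHK. ring. Qed.

Lemma fsum_scal K (c : CC) (f : nat -> CC) : fsum K (fun i => c * f i)%C = (c * fsum K f)%C.
Proof. induction K as [|K IHK]; [rewrite !fsum_0; ring|]. rewrite !fsum_S, IHK. ring. Qed.

Lemma fsum_single K (f : nat -> CC) i0 : (i0 < K)%nat ->
  (forall i, (i < K)%nat -> i <> i0 -> f i = 0%C) ->
  fsum K f = f i0.
Proof.
  induction K as [|K IHK]; intros Hi H; [lia|].
  rewrite fsum_S. destruct (Nat.eq_dec i0 K) as [->|Hne].
  - rewrite fsum_eq0 by (intros i Hi'; apply H; lia). ring.
  - rewrite IHK, (H K) by (try (intros; apply H); lia). ring.
Qed.

Lemma fsum_split_at K (f : nat -> CC) i0 : (i0 < K)%nat ->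
  fsum K f = (fsum K (fun i => if Nat.eqb i i0 then RtoC 0 else f i) + f i0)%C.
Proof.
  intros Hi.
  assert (Hsingle : fsum K (fun i => if Nat.eqb i i0 then f i else RtoC 0) = f i0).
  { rewrite (fsum_single K (fun i => if Nat.eqb i i0 then f i else RtoC 0) i0 Hi).
    - rewrite Nat.eqb_refl. reflexivity.
    - intros i _ Hne. rewrite (proj2 (Nat.eqb_neq i i0) Hne). reflexivity. }
  rewrite <- Hsingle, <- fsum_plus. apply fsum_ext. intros i _. destruct (Nat.eqb i i0); ring.
Qed.

Lemma abs_entire_fsum K (F : nat -> nat -> CC) :
  (forall j, abs_entire (F j)) -> abs_entire (fun n => fsum K (fun j => F j n)).
Proof.
  intros H. induction K as [|K IHK].
  - apply abs_entire_zero.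
  - apply abs_entire_ext with (fun n => fsum K (fun j => F j n) + F K n)%C.
    + apply abs_entire_add; [exact IHK | apply H].
    + intros n. rewrite fsum_S. reflexivity.
Qed.

Lemma pseries_eval_fsum K (F : nat -> nat -> CC) t : (forall j, abs_entire (F j)) ->
  pseries_eval (fun n => fsum K (fun j => F j n)) t = fsum K (fun j => pseries_eval (F j) t).
Proof.
  intros H. induction K as [|K IHK].
  - apply pseries_eval_zero.
  - transitivity (pseries_eval (fun n => fsum K (fun j => F j n) + F K n)%C t).
    + f_equal. apply functional_extensionality. intros n. exact (fsum_S K (fun j => F j n)).
    + rewrite pseries_eval_add, IHK, fsum_S; [reflexivity | apply abs_entire_fsum, H | apply H].
Qed.

Section SpanRepresentation.
Variable alpha : R.
Hypothesis alpha_range : 0 < alpha < 1.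

Lemma in_span_fsum N K (F : nat -> nat -> CC) : (forall j, (j < K)%nat -> in_span alpha N (F j)) ->
  in_span alpha N (fun n => fsum K (fun j => F j n)).
Proof.
  induction K as [|K IHK]; intros H.
  - apply span_zero.
  - apply in_span_ext with (fun n => fsum K (fun j => F j n) + F K n)%C.
    + apply span_add; [apply IHK; intros; apply H; lia | apply H; lia].
    + intros n. rewrite fsum_S. reflexivity.
Qed.

Lemma in_span_repr N (nu : nat -> CC) (M : nat -> nat) R u :
  (forall v k, (k < N v)%nat -> exists l, (l < R)%nat /\ nu l = v /\ (k < M l)%nat) ->
  in_span alpha N u ->
  exists c : nat -> nat -> CC, forall t,
    pseries_eval u t = fsum R (fun l => fsum (M l) (fun k => c l k * Ebasis alpha k (nu l) t))%C.
Proof.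
  intros HN Hu. induction Hu as [|k v Hk|u1 u2 H1 [c1 E1] H2 [c2 E2]|a u1 H1 [c1 E1]].
  - exists (fun _ _ => 0%C). intros t. rewrite pseries_eval_zero.
    symmetry. apply fsum_eq0. intros l _. apply fsum_eq0. intros k _. ring.
  - destruct (HN v k Hk) as [l [Hl [<- HkM]]].
    exists (fun l' k' => if andb (Nat.eqb l' l) (Nat.eqb k' k) then 1%C else 0%C). intros t.
    rewrite <- Ebasis_pseries, (fsum_single R _ l Hl), (fsum_single (M l) _ k HkM).
    + rewrite !Nat.eqb_refl. simpl. ring.
    + intros k' _ Hne. rewrite Nat.eqb_refl, (proj2 (Nat.eqb_neq k' k) Hne). simpl. ring.
    + intros l' _ Hne. apply fsum_eq0. intros k' _. rewrite (proj2 (Nat.eqb_neq l' l) Hne). simpl. ring.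
  - exists (fun l k => c1 l k + c2 l k)%C. intros t.
    rewrite pseries_eval_add, E1, E2, <- fsum_plus
      by (eapply abs_entire_of_in_span; eassumption).
    apply fsum_ext. intros l _. rewrite <- fsum_plus. apply fsum_ext. intros k _. ring.
  - exists (fun l k => a * c1 l k)%C. intros t.
    rewrite pseries_eval_scal, E1, <- fsum_scal by (eapply abs_entire_of_in_span; eassumption).
    apply fsum_ext. intros l _. rewrite <- fsum_scal. apply fsum_ext. intros k _. ring.
Qed.
End SpanRepresentation.

Section Solution.
Variables (alpha : R) (r : nat) (lam : nat -> CC) (mult : nat -> nat) (J : nat) (mu : CC).
Hypothesis alpha_range : 0 < alpha < 1.
Hypothesis lam_inj : forall i j, (i < r)%nat -> (j < r)%nat -> lam i = lam j -> i = j.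

Definition solution_mult (v : CC) : nat :=
  (add_root (fun _ => 0%nat) mu (S J) v + root_mult lam mult (seq 0 r) v)%nat.

Lemma in_span_solution (beta : nat -> CC) x : entire_coeffs x ->
  (forall t, 0 <= t -> pseries_eval (LDpoly alpha r lam mult x) t
                       = fsum (S J) (fun j => (beta j * Ebasis alpha j mu t)%C)) ->
  in_span alpha solution_mult x.
Proof.
  intros Hx Heq.
  set (z := fun n => fsum (S J) (fun j => beta j * Ebasis_coef alpha j mu n)%C).
  assert (Hcoef : forall j, abs_entire (fun n => beta j * Ebasis_coef alpha j mu n)%C)
    by (intros j; apply abs_entire_scal, (abs_entire_Ebasis_coef alpha alpha_range)).
  assert (Hyz : forall n, LDpoly alpha r lam mult x n = z n).
  { apply pseries_eval_inj.
    - apply (abs_entire_LDpoly alpha alpha_range), abs_entire_of_entire_coeffs, Hx.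
    - apply abs_entire_fsum, Hcoef.
    - intros t Ht. unfold z. rewrite Heq, pseries_eval_fsum by (exact Hcoef || lra).
      apply fsum_ext. intros j _. rewrite pseries_eval_scal, Ebasis_pseries
        by apply (abs_entire_Ebasis_coef alpha alpha_range). reflexivity. }
  assert (Hz : in_span alpha (add_root (fun _ => 0%nat) mu (S J)) z).
  { apply in_span_fsum. intros j Hj. apply span_scal, span_basis.
    unfold add_root. destruct (Ceq_dec mu mu); [lia | contradiction]. }
  apply (in_span_of_LDpoly alpha alpha_range).
  apply (in_span_ext _ _ _ _ Hz). intros n. symmetry. apply Hyz.
Qed.

Lemma solution_repr_nonresonant x : (forall l, (l < r)%nat -> mu <> lam l) ->
  in_span alpha solution_mult x ->
  exists (c : nat -> nat -> CC) (d : nat -> CC), forall t,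
    pseries_eval x t
    = (fsum r (fun l => fsum (mult l) (fun k => c l k * Ebasis alpha k (lam l) t))
       + fsum (S J) (fun j => d j * Ebasis alpha j mu t))%C.
Proof.
  intros Hmu Hx.
  (* The forcing term contributes an extra root [mu], numbered [r], with chain length [J+1]. *)
  set (nu := fun l => if Nat.ltb l r then lam l else mu).
  set (M := fun l => if Nat.ltb l r then mult l else S J).
  destruct (in_span_repr alpha alpha_range solution_mult nu M (S r) x) as [c Hc]; [|exact Hx|].
  - intros v k Hk. unfold solution_mult, add_root in Hk.
    destruct (Ceq_dec v mu) as [->|Hne].
    + rewrite root_mult_none in Hk by (intros l Hl E; apply (Hmu l Hl); auto).
      exists r. unfold nu, M. rewrite Nat.ltb_irrefl. split; [lia | split; [reflexivity | lia]].
    + destruct (root_mult_witness lam mult r v k lam_inj ltac:(lia)) as [l [Hl [<- Hkl]]].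
      exists l. unfold nu, M. rewrite (proj2 (Nat.ltb_lt l r) Hl). auto.
  - exists c, (c r). intros t. rewrite Hc, fsum_S. unfold nu, M. rewrite Nat.ltb_irrefl. f_equal.
    apply fsum_ext. intros l Hl. rewrite (proj2 (Nat.ltb_lt l r) Hl). reflexivity.
Qed.

Lemma solution_repr_resonant x l0 : (l0 < r)%nat -> mu = lam l0 ->
  in_span alpha solution_mult x ->
  exists (c : nat -> nat -> CC) (d : nat -> CC), forall t,
    pseries_eval x t
    = (fsum r (fun l => if Nat.eqb l l0 then RtoC 0
                else fsum (mult l) (fun k => c l k * Ebasis alpha k (lam l) t))
       + fsum (S (J + mult l0)) (fun k => d k * Ebasis alpha k (lam l0) t))%C.
Proof.
  intros Hl0 Hmu Hx.
  (* At the resonant root the chain of the forcing term lengthens that of [lam l0] by [J+1]. *)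
  set (M := fun l => ((if Nat.eqb l l0 then S J else 0) + mult l)%nat).
  destruct (in_span_repr alpha alpha_range solution_mult lam M r x) as [c Hc]; [|exact Hx|].
  - intros v k Hk. unfold solution_mult, add_root in Hk.
    destruct (Ceq_dec v mu) as [->|Hne].
    + rewrite Hmu, root_mult_root in Hk by assumption.
      exists l0. unfold M. rewrite Nat.eqb_refl. repeat split; [assumption | symmetry; assumption | lia].
    + destruct (root_mult_witness lam mult r v k lam_inj ltac:(lia)) as [l [Hl [<- Hkl]]].
      assert (l <> l0) by (intros ->; apply Hne, eq_sym, Hmu).
      exists l. unfold M. rewrite (proj2 (Nat.eqb_neq l l0)) by assumption. auto.
  - exists c, (c l0). intros t. rewrite Hc, (fsum_split_at r _ l0 Hl0). unfold M at 2.
    rewrite Nat.eqb_refl. f_equal.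
    apply fsum_ext. intros l _. unfold M. destruct (Nat.eqb l l0); reflexivity.
Qed.
End Solution.

Theorem mainTheorem19
  (alpha : R) (r : nat) (lam : nat -> CC) (mult : nat -> nat)
  (J : nat) (beta : nat -> CC) (mu : CC) (x : nat -> CC) :
  0 < alpha < 1 ->
  (0 < r)%nat ->
  (forall i j, (i < r)%nat -> (j < r)%nat -> lam i = lam j -> i = j) ->
  (forall l, (l < r)%nat -> (1 <= mult l)%nat) ->
  entire_coeffs x ->
  (forall t, 0 <= t ->
     pseries_eval (LDpoly alpha r lam mult x) t
     = fsum (S J) (fun j => (beta j * Ebasis alpha j mu t)%C)) ->
  ((forall l, (l < r)%nat -> mu <> lam l) ->
     exists (c : nat -> nat -> CC) (d : nat -> CC),
       forall t, 0 <= t ->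
         pseries_eval x t
         = (fsum r (fun l => fsum (mult l) (fun k => c l k * Ebasis alpha k (lam l) t))
            + fsum (S J) (fun j => d j * Ebasis alpha j mu t))%C)
  /\
  (forall l0, (l0 < r)%nat -> mu = lam l0 ->
     exists (c : nat -> nat -> CC) (d : nat -> CC),
       forall t, 0 <= t ->
         pseries_eval x t
         = (fsum r (fun l => if Nat.eqb l l0 then RtoC 0
                     else fsum (mult l) (fun k => c l k * Ebasis alpha k (lam l) t))
            + fsum (S (J + mult l0)) (fun k => d k * Ebasis alpha k (lam l0) t))%C).
Proof.
  intros Halpha _ Hinj _ Hx Heq.
  pose proof (in_span_solution alpha r lam mult J mu Halpha beta x Hx Heq) as Hspan.
  split.
  - intros Hmu.
    destruct (solution_repr_nonresonant alpha r lam mult J mu Halpha Hinj x Hmu Hspan) as [c [d Hcd]].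
    exists c, d. intros t _. apply Hcd.
  - intros l0 Hl0 Hmu.
    destruct (solution_repr_resonant alpha r lam mult J mu Halpha Hinj x l0 Hl0 Hmu Hspan)
      as [c [d Hcd]].
    exists c, d. intros t _. apply Hcd.
Qed.
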